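(* Let $K$ be a field containing no $n$-th root of unity other than $1$. Let $A$ be a central simple algebra over $K$ of dimension $n^2$ such that every commutative subalgebra of $A$ other than $K$ is maximal (among commutative subalgebras). Then the group $\mathrm{SL}_1(A)$ is CA.
   Context: $\mathrm{SL}_1(A)$ is the group of elements of $A^\times$ of reduced norm $1$. A group is CA if the centralizer of every non-trivial element is abelian. *)

From HB Require Import structures.
From mathcomp Require Import all_boot all_order all_algebra all_field.
Set Implicit Arguments. Unset Strict Implicit. Unset Printing Implicit Defensive.
Import GRing.Theory.
Local Open Scope ring_scope.

Section Defs.
Variable K : fieldType.
Variable A : falgType K.

Definition is_subalg (U : {vspace A}) : Prop :=
  1 \in U /\ (U * U <= U)%VS.

Definition is_comm_subalg (U : {vspace A}) : Prop :=
  is_subalg U /\ {in U &, forall x y, x * y = y * x}.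

Definition maximal_comm_subalg (U : {vspace A}) : Prop :=
  is_comm_subalg U /\
  forall V : {vspace A}, is_comm_subalg V -> (U <= V)%VS -> V = U.

Definition central_alg : Prop := ('Z({:A}) = 1)%VS.

Definition simple_alg : Prop :=
  forall I : {vspace A}, (fullv * I <= I)%VS -> (I * fullv <= I)%VS ->
    I = 0%VS \/ I = fullv.

Definition central_simple : Prop := central_alg /\ simple_alg.

(* A splitting of A of degree n over a field extension iota : K -> L:
   a unital K-algebra homomorphism rho : A -> M_n(L) (L-linearly extended it
   gives the isomorphism A (x)_K L ~ M_n(L) when A is central simple of
   dimension n^2). *)
Definition splitting (n : nat) (L : fieldType) (iota : {rmorphism K -> L})
    (rho : A -> 'M[L]_n) : Prop :=
  [/\ forall a b, rho (a + b) = rho a + rho b,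
      forall (k : K) a, rho (k *: a) = iota k *: rho a,
      forall a b, rho (a * b) = rho a *m rho b
    & rho 1 = 1%:M].

Definition reduced_norm n (L : fieldType) (iota : {rmorphism K -> L}) (rho : A -> 'M[L]_n)
  (a : A) : L := \det (rho a).

Definition SL1 n (L : fieldType) (iota : {rmorphism K -> L}) (rho : A -> 'M[L]_n) : pred A :=
  fun a => (a \is a GRing.unit) && (reduced_norm iota rho a == 1).
End Defs.

Definition CA_group (R : ringType) (G : pred R) : Prop :=
  forall x, G x -> x != 1 ->
    forall y z, G y -> G z -> y * x = x * y -> z * x = x * z -> y * z = z * y.

From HB Require Import structures.
From mathcomp Require Import all_boot all_order all_algebra all_field.

Set Implicit Arguments.
Unset Strict Implicit.
Unset Printing Implicit Defensive.

Import GRing.Theory.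
Local Open Scope ring_scope.

(** A non-trivial element x of SL_1(A) is not a scalar, since a scalar of
    reduced norm 1 is an n-th root of unity.  Hence K[x] is a commutative
    subalgebra other than K, thus maximal commutative.  A maximal commutative
    subalgebra contains its centralizer (adjoining a centralizing element keeps
    it commutative), and everything commuting with x centralizes K[x], so the
    centralizer of x lies in the commutative algebra K[x]. *)

Section CommutativeSubalgebras.
Variables (K : fieldType) (A : falgType K).
Implicit Types (U V W : {vspace A}) (x w : A).

Lemma agenv_centv W V : (W <= 'C(V))%VS -> (agenv W <= 'C(V))%VS.
Proof.
move=> sWC; apply: agenv_sub_modl; first by rewrite -memvE centv1.
exact: (@prodv_sub _ _ _ _ ('C(V))%AS sWC (subvv _)).
Qed.

Lemma agenv_comm W : (W <= 'C(W))%VS -> (agenv W <= 'C(agenv W))%VS.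
Proof. by move=> cWW; rewrite agenv_centv // centvC agenv_centv. Qed.

Lemma is_comm_subalg_agenv W : (W <= 'C(W))%VS -> is_comm_subalg (agenv W).
Proof.
move=> /agenv_comm/centvsP cW.
by split; [split; [rewrite memvE sub1_agenv | rewrite agenvM] | ].
Qed.

Lemma vline_comm x : (<[x]> <= 'C(<[x]>))%VS.
Proof. by rewrite -memvE -subv_cent1 -memvE cent1v_id. Qed.

Lemma adjoin_comm U w :
  (U <= 'C(U))%VS -> w \in 'C(U)%VS -> (<<U; w>> <= 'C(<<U; w>>))%VS.
Proof.
move=> cUU cUw; apply: agenv_comm.
have cwU : (<[w]> <= 'C(U))%VS by rewrite -memvE.
rewrite subv_add !(centvC _ (U + _)) !subv_add cUU cwU vline_comm.
by rewrite centvC cwU.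
Qed.

Lemma maximal_comm_subalg_centv U : maximal_comm_subalg U -> ('C(U) <= U)%VS.
Proof.
move=> [[[U1 _] /centvsP cUU] maxU]; apply/subvP => w cUw.
have commV : is_comm_subalg <<U; w>>%VS.
  split; last exact/centvsP/adjoin_comm.
  by split; [exact: subvP_adjoin | rewrite agenvM].
by rewrite -(maxU _ commV (subv_adjoin U w)) memv_adjoin.
Qed.

Lemma cent1_sub_agenv x : ('C[x] <= 'C(agenv <[x]>))%VS.
Proof. by rewrite centvC agenv_centv // -memvE -subv_cent1. Qed.

Lemma cent1_comm x :
  (forall U, is_comm_subalg U -> U != 1%VS -> maximal_comm_subalg U) ->
  x \notin 1%VS -> {in 'C[x]%VS &, forall y z, y * z = z * y}.
Proof.
move=> hmax xK; set U := agenv <[x]>.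
have commU : is_comm_subalg U by apply: is_comm_subalg_agenv; apply: vline_comm.
have xU : x \in U by rewrite memvE sub_agenv.
have U_neq1 : U != 1%VS by apply: contraNneq xK => <-.
have sCU : ('C[x] <= U)%VS.
  apply: subv_trans (cent1_sub_agenv x) _.
  exact: maximal_comm_subalg_centv (hmax _ commU U_neq1).
by move=> y z /(subvP sCU) yU /(subvP sCU) zU; case: commU => _; apply.
Qed.

End CommutativeSubalgebras.

Section ScalarsInSL1.
Variables (K : fieldType) (A : falgType K) (n : nat) (L : fieldType).
Variables (iota : {rmorphism K -> L}) (rho : A -> 'M[L]_n).
Hypothesis split_rho : splitting iota rho.

Lemma reduced_norm_scalar (k : K) : reduced_norm iota rho k%:A = iota k ^+ n.
Proof.
case: split_rho => _ rhoZ _ rho1.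
by rewrite /reduced_norm rhoZ rho1 scalemx1 det_scalar.
Qed.

Lemma SL1_scalar_eq1 x :
  (forall z : K, z ^+ n = 1 -> z = 1) -> x \in 1%VS -> SL1 iota rho x -> x = 1.
Proof.
move=> no_roots /vlineP[k ->] /andP[_ /eqP].
rewrite reduced_norm_scalar -rmorphXn => /eqP; rewrite fmorph_eq1 => /eqP.
by move/no_roots ->; rewrite scale1r.
Qed.

End ScalarsInSL1.

Theorem proposition2p9 (K : fieldType) (n : nat) (A : falgType K)
    (L : fieldType) (iota : {rmorphism K -> L}) (rho : A -> 'M[L]_n) :
  (forall z : K, z ^+ n = 1 -> z = 1) ->
  central_simple A ->
  \dim (fullv : {vspace A}) = (n ^ 2)%N ->
  (forall U : {vspace A}, is_comm_subalg U -> U != 1%VS -> maximal_comm_subalg U) ->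
  splitting iota rho ->
  CA_group (SL1 iota rho).
Proof.
move=> no_roots _ _ hmax split_rho x SLx x_neq1 y z _ _ yx zx.
have xK : x \notin 1%VS.
  by apply: contra x_neq1 => xK; rewrite (SL1_scalar_eq1 split_rho no_roots xK SLx).
by apply: (cent1_comm hmax xK); apply/cent1vP.
Qed.
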